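(* There exists a pair of SBP operators $D_+, D_-$ (in the sense defined in the context) which is nullspace consistent but does not have the eigenvalue property. That is, there exist $n$, an interval $[a,b]$, and data $D_+, D_-, H, S, \mathbf{p}_0, \mathbf{p}_n, \mathbf{x}$ satisfying conditions (A)–(E) for some order $q\ge 1$, such that $\ker D_+ = \operatorname{span}\{\mathbf{1}\}$, but the matrix $\tilde D_+ = D_+ + H^{-1}\mathbf{p}_0\mathbf{p}_0^\top$ has an eigenvalue with non-positive real part.
   Context: Let $[a,b]$ be an interval with $b>a$ and $n\ge 1$. For $\mathbf{x}\in\mathbb{R}^{n+1}$, $\mathbf{x}^j$ denotes elementwise exponentiation, with $\mathbf{x}^0=\mathbf{1}=(1,\dots,1)^\top$. Matrices $D_+, D_-\in\mathbb{R}^{(n+1)\times(n+1)}$ form a pair of SBP (summation-by-parts) operators of order $q\ge 1$ on $[a,b]$ if there exist matrices $H,S\in\mathbb{R}^{(n+1)\times(n+1)}$ and vectors $\mathbf{p}_0,\mathbf{p}_n,\mathbf{x}\in\mathbb{R}^{n+1}$ such that: (A) $D_\pm \mathbf{x}^j = j\mathbf{x}^{j-1}$, $\mathbf{p}_0^\top\mathbf{x}^j = a^j$, $\mathbf{p}_n^\top \mathbf{x}^j = b^j$ for $j=0,\dots,q$ (with $0\cdot\mathbf{x}^{-1}:=\mathbf{0}$); (B) $H=H^\top$ is positive definite; (C) $HD_+ + D_+^\top H = -\mathbf{p}_0\mathbf{p}_0^\top + \mathbf{p}_n\mathbf{p}_n^\top + S$ with $S=S^\top$ positive semidefinite; (D)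 $HD_+ + D_-^\top H = -\mathbf{p}_0\mathbf{p}_0^\top + \mathbf{p}_n\mathbf{p}_n^\top$; (E) $\mathbf{x}=(x_0,\dots,x_n)^\top$ with $x_i\ne x_j$ for $i\ne j$. The SBP operator is called nullspace consistent if $\ker D_+=\operatorname{span}\{\mathbf{1}\}$. Set $\tilde D_+ := D_+ + H^{-1}\mathbf{p}_0\mathbf{p}_0^\top$. The SBP operator has the eigenvalue property if every eigenvalue of $\tilde D_+$ has strictly positive real part. *)

From mathcomp Require Import all_boot all_order all_algebra.
From mathcomp Require Import Rstruct complex.
From Stdlib Require Import Reals.
Set Implicit Arguments. Unset Strict Implicit. Unset Printing Implicit Defensive.
Import Order.TTheory GRing.Theory Num.Theory ComplexField.
Local Open Scope ring_scope.

Section SBP.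
Variable R : rcfType.

Definition xpow m (x : 'cV[R]_m) (j : nat) : 'cV[R]_m := \col_i (x i 0 ^+ j).

Definition posdef m (H : 'M[R]_m) : Prop :=
  H^T = H /\ forall v : 'cV[R]_m, v != 0 -> 0 < (v^T *m H *m v) 0 0.

Definition possemidef m (S : 'M[R]_m) : Prop :=
  S^T = S /\ forall v : 'cV[R]_m, 0 <= (v^T *m S *m v) 0 0.

Definition SBP_pair n (a b : R) (q : nat) (Dp Dm H S : 'M[R]_n.+1)
    (p0 pn x : 'cV[R]_n.+1) : Prop :=
  [/\
      (forall j : nat, leq j q ->
         [/\ Dp *m xpow x j = j%:R *: xpow x j.-1,
             Dm *m xpow x j = j%:R *: xpow x j.-1,
             p0^T *m xpow x j = (a ^+ j)%:M
           & pn^T *m xpow x j = (b ^+ j)%:M]),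
      posdef H,
      H *m Dp + Dp^T *m H = - (p0 *m p0^T) + pn *m pn^T + S /\ possemidef S,
      H *m Dp + Dm^T *m H = - (p0 *m p0^T) + pn *m pn^T
    &
      injective (fun i : 'I_n.+1 => x i 0)].

Definition nullspace_consistent m (Dp : 'M[R]_m) : Prop :=
  forall v : 'cV[R]_m, Dp *m v = 0 <-> exists c : R, v = c *: const_mx 1.

Definition Dtilde m (Dp H : 'M[R]_m) (p0 : 'cV[R]_m) : 'M[R]_m :=
  Dp + invmx H *m (p0 *m p0^T).

Definition ceigenvalue m (A : 'M[R]_m) (lam : R[i]) : bool :=
  eigenvalue (map_mx (fun r : R => (r%:C)%C) A) lam.

End SBP.

(* D_+ = D_- is a central first-order SBP operator on the six equidistant
   nodes 0, ..., 5 with diagonal norm H and S = 0.  Its kernel is span{1},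
   but D~_+ leaves a two-dimensional real subspace invariant and acts on it
   as a rotation by a right angle: there are real rows y_r != 0 and y_i with
   y_r D~_+ = - y_i and y_i D~_+ = y_r.  Then y_r + i y_i is a left
   eigenvector of D~_+ for the eigenvalue i, whose real part is 0. *)
From mathcomp Require Import all_boot all_order all_algebra.
From mathcomp Require Import Rstruct complex.
From Stdlib Require Import Reals.
From mathcomp Require Import ring lra.
Import Order.TTheory GRing.Theory Num.Theory ComplexField.
Local Open Scope ring_scope.

Section GeneralFacts.
Variable R : rcfType.

Lemma xpow0 m (x : 'cV[R]_m) : xpow x 0 = const_mx 1.
Proof. by apply/matrixP => i j; rewrite !mxE expr0. Qed.

Lemma tr_delta_mulmx m (i : 'I_m) (v : 'cV[R]_m) :
  (delta_mx i 0)^T *m v = (v i 0)%:M.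
Proof.
by rewrite trmx_delta -rowE; apply/matrixP => k l; rewrite !ord1 !mxE eqxx.
Qed.

Lemma posdef_diag_mx m (d : 'rV[R]_m) :
  (forall i, 0 < d 0 i) -> posdef (diag_mx d).
Proof.
move=> d_gt0; split; first exact: tr_diag_mx.
move=> v v_neq0.
have quadE : (v^T *m diag_mx d *m v) 0 0 = \sum_i d 0 i * v i 0 ^+ 2.
  rewrite mul_mx_diag mxE; apply: eq_bigr => i _.
  by rewrite !mxE mulrAC mulrC expr2 mulrA.
have terms_ge0 i : true -> 0 <= d 0 i * v i 0 ^+ 2.
  by move=> _; rewrite mulr_ge0 ?sqr_ge0 ?ltW.
rewrite quadE lt_def sumr_ge0 // andbT; apply: contra v_neq0 => /eqP sum0.
apply/eqP/matrixP => i j; rewrite (ord1 j) mxE.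
have /eqP := psumr_eq0P terms_ge0 sum0 (i := i) isT.
by rewrite mulf_eq0 sqrf_eq0 gt_eqF //= => /eqP.
Qed.

Lemma invmx_diag_mx m (d : 'rV[R]_m) :
  (forall i, d 0 i != 0) -> invmx (diag_mx d) = diag_mx (map_mx GRing.inv d).
Proof.
move=> d_neq0.
have dK : diag_mx d *m diag_mx (map_mx GRing.inv d) = 1%:M.
  apply/matrixP => i j; rewrite mul_diag_mx !mxE.
  by case: eqP => [->|]; rewrite ?mulr0 ?mulr1n ?divff // mulr0n mulr0.
have [d_unit _] := mulmx1_unit dK.
by rewrite -[RHS](mulKmx d_unit) dK mulmx1.
Qed.

Lemma Dtilde_diag_mx m (D : 'M[R]_m) (d : 'rV[R]_m) (i : 'I_m) :
  (forall j, d 0 j != 0) ->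
  Dtilde D (diag_mx d) (delta_mx i 0) = D + (d 0 i)^-1 *: delta_mx i i.
Proof.
move=> d_neq0; rewrite /Dtilde invmx_diag_mx // trmx_delta mul_delta_mx.
congr (_ + _); apply/matrixP => k l; rewrite mul_diag_mx !mxE.
by case: (k =P i) => [-> | _]; rewrite ?mulr0.
Qed.

Lemma ceigenvalue_i m (A : 'M[R]_m) (yr yi : 'rV[R]_m) :
  yr *m A = - yi -> yi *m A = yr -> yr != 0 -> ceigenvalue A 'i%C.
Proof.
move=> yrA yiA yr_neq0; apply/eigenvalueP.
pose f := real_complex R.
exists (map_mx f yr + 'i%C *: map_mx f yi).
  have -> : map_mx (fun r : R => (r%:C)%C) A = map_mx f A by [].
  have ii : ('i * 'i = -1 :> R[i])%C.
    by apply/eqP; rewrite eq_complex /= !mul0r; apply/andP; split; apply/eqP; ring.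
  rewrite mulmxDl -scalemxAl -!map_mxM yrA yiA map_mxN scalerDr scalerA ii.
  by rewrite scaleN1r addrC.
apply: contra yr_neq0 => /eqP/matrixP y0; apply/eqP/matrixP => i j.
move/(_ i j)/eqP: y0; rewrite !mxE eq_complex /= => /andP[/eqP re0 _].
by move: re0; rewrite mul0r mul1r subr0 addr0.
Qed.

Lemma central_SBP_pair_order1 n (a b : R) (D H : 'M[R]_n.+1) (x : 'cV[R]_n.+1) :
  D *m (const_mx 1 : 'cV_n.+1) = 0 -> D *m xpow x 1 = const_mx 1 ->
  x 0 0 = a -> x ord_max 0 = b ->
  posdef H ->
  let p0 : 'cV[R]_n.+1 := delta_mx 0 0 in
  let pn : 'cV[R]_n.+1 := delta_mx ord_max 0 in
  H *m D + D^T *m H = - (p0 *m p0^T) + pn *m pn^T ->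
  injective (fun i => x i 0) ->
  SBP_pair a b 1 D D H 0 p0 pn x.
Proof.
move=> D1 Dx xa xb Hpos p0 pn Deq xinj.
have D_exact (j : nat) : leq j 1 -> D *m xpow x j = j%:R *: xpow x j.-1.
  by case: j => [|[|]] // _; rewrite xpow0 ?D1 ?Dx ?scale0r ?scale1r.
have boundary (i : 'I_n.+1) (j : nat) : (delta_mx i 0)^T *m xpow x j = (x i 0 ^+ j)%:M.
  by rewrite tr_delta_mulmx mxE.
split => //.
- move=> j j_le1; rewrite !boundary xa xb.
  by split=> //; exact: D_exact.
- split; first by rewrite addr0.
  split=> [|v]; first exact: trmx0.
  by rewrite mulmx0 mul0mx mxE.
Qed.

End GeneralFacts.

Section Counterexample.
Variable R : rcfType.

Definition cex_entry (i j : nat) : R :=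
  match i, j with
  | 0, 0 => -1      | 0, 1 => 0        | 0, 2 => 5/11     | 0, 3 => 10/11
  | 0, 4 => 9/11    | 0, _ => -(13/11)
  | 1, 0 => 0       | 1, 1 => 0        | 1, 2 => -(75/176) | 1, 3 => 35/88
  | 1, 4 => -(91/176) | 1, _ => 6/11
  | 2, 0 => -(2/11) | 2, 1 => 45/176   | 2, 2 => 0        | 2, 3 => -(119/176)
  | 2, 4 => 21/88   | 2, _ => 4/11
  | 3, 0 => -(4/11) | 3, 1 => -(21/88) | 3, 2 => 119/176  | 3, 3 => 0
  | 3, 4 => -(45/176) | 3, _ => 2/11
  | 4, 0 => -(6/11) | 4, 1 => 91/176   | 4, 2 => -(35/88) | 4, 3 => 75/176
  | 4, 4 => 0       | 4, _ => 0
  | _, 0 => 13/11   | _, 1 => -(9/11)  | _, 2 => -(10/11) | _, 3 => -(5/11)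
  | _, 4 => 0       | _, _ => 1
  end.

Definition cex_weight (i : nat) : R :=
  match i with 0 | 5 => 1/2 | 1 | 4 => 3/4 | _ => 5/4 end.

Definition cex_D : 'M[R]_6 := \matrix_(i, j) cex_entry i j.
Definition cex_H : 'M[R]_6 := diag_mx (\row_i cex_weight i).
Definition cex_x : 'cV[R]_6 := \col_i (i : nat)%:R.
Definition cex_p0 : 'cV[R]_6 := delta_mx 0 0.
Definition cex_pn : 'cV[R]_6 := delta_mx ord_max 0.

Definition cex_yr : 'rV[R]_6 :=
  \row_j match (j : nat) with 1 | 4 => 2 | 2 | 3 => -2 | _ => 0 end.
Definition cex_yi : 'rV[R]_6 :=
  \row_j match (j : nat) with 1 => -1 | 2 => 3 | 3 => -3 | 4 => 1 | _ => 0 end.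

Ltac ord6_case := case=> [[|[|[|[|[|[|?]]]]]] ?] //.
Ltac expand_mx := repeat progress rewrite ?mxE ?big_ord_recr ?big_ord0 /=.
Ltac entrywise := apply/matrixP; ord6_case; ord6_case; expand_mx.

Lemma cex_D_const : cex_D *m (const_mx 1 : 'cV_6) = 0.
Proof. by entrywise; lra. Qed.

Lemma cex_D_x : cex_D *m xpow cex_x 1 = const_mx 1.
Proof. by entrywise; lra. Qed.

Lemma cex_weight_gt0 (i : nat) : 0 < cex_weight i.
Proof. by rewrite /cex_weight; case: i => [|[|[|[|[|[|i]]]]]]; lra. Qed.

Lemma cex_H_posdef : posdef cex_H.
Proof. by apply: posdef_diag_mx => i; rewrite mxE cex_weight_gt0. Qed.

Lemma cex_SBP_identity :
  cex_H *m cex_D + cex_D^T *m cex_H = - (cex_p0 *m cex_p0^T) + cex_pn *m cex_pn^T.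
Proof. by rewrite /cex_H !mul_diag_mx !mul_mx_diag; entrywise; lra. Qed.

Lemma cex_x_injective : injective (fun i : 'I_6 => cex_x i 0).
Proof. by move=> i j /=; rewrite !mxE => /eqP; rewrite eqr_nat => /eqP /val_inj. Qed.

Lemma cex_nullspace_consistent : nullspace_consistent cex_D.
Proof.
move=> v; split=> [/matrixP Dv0 | [c ->]]; last first.
  by rewrite -scalemxAr cex_D_const scaler0.
pose w k := v (inord k) 0.
have vE (i : 'I_6) : v i 0 = w i by rewrite /w inord_val.
exists (w 0%N); apply/matrixP => i j; rewrite (ord1 j) !mxE mulr1 vE.
have := Dv0 0 0; have := Dv0 1 0; have := Dv0 2 0; have := Dv0 3 0;
have := Dv0 4 0; have := Dv0 5 0; expand_mx; rewrite !vE /=.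
by move: i; ord6_case => /=; lra.
Qed.

Lemma cex_Dtilde_rotation :
  let Dt := Dtilde cex_D cex_H cex_p0 in
  cex_yr *m Dt = - cex_yi /\ cex_yi *m Dt = cex_yr.
Proof.
rewrite /cex_H /cex_p0 Dtilde_diag_mx; last by move=> i; rewrite mxE gt_eqF ?cex_weight_gt0.
by split; entrywise; lra.
Qed.

End Counterexample.

Theorem theorem1 :
  exists (n : nat) (a b : Rdefinitions.R) (q : nat)
         (Dp Dm H S : 'M[Rdefinitions.R]_n.+1) (p0 pn x : 'cV[Rdefinitions.R]_n.+1),
    [/\ [/\ leq 1 n, a < b & leq 1 q],
        SBP_pair a b q Dp Dm H S p0 pn x,
        nullspace_consistent Dp
      & exists lam : Rdefinitions.R[i],
          ceigenvalue (Dtilde Dp H p0) lam /\ complex.Re lam <= 0].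
Proof.
exists 5%N, 0, 5, 1%N, (cex_D _), (cex_D _), (cex_H _), 0, (cex_p0 _), (cex_pn _), (cex_x _).
split.
- by split=> //; rewrite ltr0n.
- apply: central_SBP_pair_order1.
  + exact: cex_D_const.
  + exact: cex_D_x.
  + by rewrite mxE.
  + by rewrite mxE.
  + exact: cex_H_posdef.
  + exact: cex_SBP_identity.
  + exact: cex_x_injective.
- exact: cex_nullspace_consistent.
- exists 'i%C; split=> //.
  have [yrD yiD] := cex_Dtilde_rotation Rdefinitions.R.
  apply: ceigenvalue_i yrD yiD _.
  by apply/eqP => /matrixP /(_ 0 1); rewrite !mxE /=; apply/eqP; rewrite pnatr_eq0.
Qed.
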